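(* Let $\psi$ be a saturation with saturation level $\alpha>0$, let $u:[0,L]\to\mathbb{R}$ be a given velocity, and consider the explicit finite-volume scheme for $\partial_t\rho+\partial_x(\rho\psi(\rho)u(x))=0$ on $(0,L)$ described in the context. Fix $n$ and suppose $0\le\rho_i^n\le\alpha$ for all $i$. Then the updated values satisfy $0\le\rho_i^{n+1}\le\alpha$ for all $i$, provided $$\Delta t\le \Gamma\,\frac{\Delta x}{2\max_i|u_{i+1/2}|},\qquad \Gamma=\min\Big\{\frac{1}{\psi(0)},\gamma\Big\},\qquad \gamma=\inf_{s\in(0,\alpha)}\frac{\alpha-s}{\alpha\psi(s)}.$$
   Context: A saturation is a continuous function $\psi:[0,\infty)\to\mathbb{R}$ that is non-increasing and for which there is $\alpha>0$ (the saturation level) with $\psi(\alpha)=0$ and $(\alpha-s)\psi(s)>0$ for $s\neq\alpha$. Discretisation: $\Delta x=L/M$, cells $C_i=(x_{i-1/2},x_{i+1/2})$ with centres $x_i=\Delta x(i-1/2)$, $i=1,\dots,M$; time steps $t^n=n\Delta t$; $\rho_i^n$ is the value on cell $C_i$ at time $t^n$. The scheme is $$\frac{\rho_i^{n+1}-\rho_i^n}{\Delta t}+\frac{F_{i+1/2}^n-F_{i-1/2}^n}{\Delta x}=0,\qquad F_{i+1/2}^n=\rho_i^E\psi_{i+1}^W u_{i+1/2}^++\rho_{i+1}^W\psi_i^E u_{i+1/2}^-,$$ with no-flux boundary conditions $F_{1/2}^n=F_{M+1/2}^n=0$, where $u_{i+1/2}=u(x_{i+1/2})$, $a^+=\max\{a,0\}$,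 $a^-=\min\{a,0\}$, $\rho_i^E=\rho_i^n+\frac{\Delta x}{2}(\rho_x)_i^n$, $\rho_i^W=\rho_i^n-\frac{\Delta x}{2}(\rho_x)_i^n$, $\psi_i^E=\psi(\rho_i^E)$, $\psi_i^W=\psi(\rho_i^W)$, and $$(\rho_x)_i^n=\mathrm{minmod}\Big(\theta\frac{\rho_{i+1}^n-\rho_i^n}{\Delta x},\frac{\rho_{i+1}^n-\rho_{i-1}^n}{2\Delta x},\theta\frac{\rho_i^n-\rho_{i-1}^n}{\Delta x}\Big),\quad \theta=2,$$ where $\mathrm{minmod}(a,b,c)=\min(a,b,c)$ if $a,b,c>0$, $\max(a,b,c)$ if $a,b,c<0$, and $0$ otherwise. The hypothesis ''$0\le\rho_i^n\le\alpha$ for all $i$'' applies to all values entering the slope computations. *)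

From Stdlib Require Import Reals Lra List.
Import ListNotations.
Open Scope R_scope.

Definition continuous_on_nonneg (f : R -> R) : Prop :=
  forall x, 0 <= x -> forall eps, 0 < eps ->
    exists delta, 0 < delta /\
      forall y, 0 <= y -> Rabs (y - x) < delta -> Rabs (f y - f x) < eps.

Definition is_saturation (psi : R -> R) (alpha : R) : Prop :=
  continuous_on_nonneg psi /\
  (forall x y, 0 <= x -> x <= y -> psi y <= psi x) /\
  0 < alpha /\ psi alpha = 0 /\
  (forall s, 0 <= s -> s <> alpha -> (alpha - s) * psi s > 0).

Definition is_inf (E : R -> Prop) (g : R) : Prop :=
  (forall x, E x -> g <= x) /\
  (forall b, (forall x, E x -> b <= x) -> b <= g).

Definition pos_part (a : R) : R := Rmax a 0.
Definition neg_part (a : R) : R := Rmin a 0.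

Definition minmod (a b c : R) : R :=
  if Rlt_dec 0 a then
    (if Rlt_dec 0 b then (if Rlt_dec 0 c then Rmin a (Rmin b c) else 0) else 0)
  else if Rlt_dec a 0 then
    (if Rlt_dec b 0 then (if Rlt_dec c 0 then Rmax a (Rmax b c) else 0) else 0)
  else 0.

Definition theta : R := 2.

(* Cell values rho : nat -> R, cells i = 1..M; rho 0 and rho (M+1) are the
   values entering the slope computations at the boundary cells. *)
Definition slope (rho : nat -> R) (dx : R) (i : nat) : R :=
  minmod (theta * (rho (S i) - rho i) / dx)
         ((rho (S i) - rho (pred i)) / (2 * dx))
         (theta * (rho i - rho (pred i)) / dx).

Definition rhoE (rho : nat -> R) (dx : R) (i : nat) : R :=
  rho i + dx / 2 * slope rho dx i.
Definition rhoW (rho : nat -> R) (dx : R) (i : nat) : R :=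
  rho i - dx / 2 * slope rho dx i.

(* interface x_{i+1/2} = dx * i *)
Definition interface (dx : R) (i : nat) : R := dx * INR i.

(* numerical flux F_{i+1/2}, with no-flux boundary conditions F_{1/2} = F_{M+1/2} = 0 *)
Definition flux (psi u : R -> R) (M : nat) (dx : R) (rho : nat -> R) (i : nat) : R :=
  if Nat.eqb i 0 then 0 else if Nat.eqb i M then 0 else
  let ui := u (interface dx i) in
  rhoE rho dx i * psi (rhoW rho dx (S i)) * pos_part ui
  + rhoW rho dx (S i) * psi (rhoE rho dx i) * neg_part ui.

Definition step (psi u : R -> R) (M : nat) (dx dt : R) (rho : nat -> R) (i : nat) : R :=
  rho i - dt / dx * (flux psi u M dx rho i - flux psi u M dx rho (pred i)).

Definition umax (u : R -> R) (M : nat) (dx : R) : R :=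
  fold_right Rmax 0 (map (fun i => Rabs (u (interface dx i))) (seq 0 (S M))).

(* The reconstructed interface values stay in [0, alpha] because the minmod
   slope never overshoots the neighbouring cell averages, and rho_i is their
   mean: rho_i = (rho_i^E + rho_i^W) / 2.  The update at cell i involves the
   outgoing fluxes through both interfaces, each bounded by rho_i^E psi(0) U
   resp. rho_i^W psi(0) U, and the incoming ones, each bounded by
   alpha psi(rho_i^E) U resp. alpha psi(rho_i^W) U, where U = max |u|.  The
   CFL condition makes the first pair at most rho_i and the second pair at most
   (alpha - rho_i^E)/2 + (alpha - rho_i^W)/2 = alpha - rho_i; this is exactly
   what gamma and 1/psi(0) encode. *)
From Stdlib Require Import Reals Lra List Lia.
Open Scope R_scope.

Lemma Rmult3_bounds a b c a' b' c' :
  0 <= a <= a' -> 0 <= b <= b' -> 0 <= c <= c' -> 0 <= a * b * c <= a' * b' * c'.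
Proof.
  intros Ha Hb Hc; split.
  - apply Rmult_le_pos; [apply Rmult_le_pos|]; lra.
  - apply Rmult_le_compat; try lra.
    + apply Rmult_le_pos; lra.
    + apply Rmult_le_compat; lra.
Qed.

Lemma pos_part_bounds v U : Rabs v <= U -> 0 <= pos_part v <= U.
Proof. unfold pos_part, Rmax, Rabs; destruct Rle_dec, Rcase_abs; lra. Qed.

Lemma neg_part_bounds v U : Rabs v <= U -> - U <= neg_part v <= 0.
Proof. unfold neg_part, Rmin, Rabs; destruct Rle_dec, Rcase_abs; lra. Qed.

Lemma fold_right_Rmax_ge0 l : 0 <= fold_right Rmax 0 l.
Proof.
  induction l as [|x l IH]; simpl; [lra|].
  eapply Rle_trans; [exact IH | apply Rmax_r].
Qed.

Lemma In_le_fold_right_Rmax x l : In x l -> x <= fold_right Rmax 0 l.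
Proof.
  induction l as [|y l IH]; simpl; [tauto|].
  intros [<- | Hx]; [apply Rmax_l|].
  eapply Rle_trans; [exact (IH Hx) | apply Rmax_r].
Qed.

Lemma umax_ge0 u M dx : 0 <= umax u M dx.
Proof. apply fold_right_Rmax_ge0. Qed.

Lemma Rabs_le_umax u M dx j : (j <= M)%nat -> Rabs (u (interface dx j)) <= umax u M dx.
Proof.
  intros Hj; apply In_le_fold_right_Rmax.
  apply (in_map (fun k => Rabs (u (interface dx k)))), in_seq; lia.
Qed.

Lemma minmod_bounds a b c :
  (0 < minmod a b c -> minmod a b c <= a /\ minmod a b c <= c) /\
  (minmod a b c < 0 -> a <= minmod a b c /\ c <= minmod a b c).
Proof. unfold minmod, Rmin, Rmax; repeat destruct Rlt_dec; repeat destruct Rle_dec; lra. Qed.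

Lemma rhoE_add_rhoW rho dx j : rhoE rho dx j + rhoW rho dx j = 2 * rho j.
Proof. unfold rhoE, rhoW; ring. Qed.

Lemma reconstruction_between rho dx lo hi j : 0 < dx ->
  lo <= rho (pred j) <= hi -> lo <= rho j <= hi -> lo <= rho (S j) <= hi ->
  lo <= rhoE rho dx j <= hi /\ lo <= rhoW rho dx j <= hi.
Proof.
  intros Hdx Hl Hc Hr; unfold rhoE, rhoW.
  pose proof (minmod_bounds (theta * (rho (S j) - rho j) / dx)
                ((rho (S j) - rho (pred j)) / (2 * dx))
                (theta * (rho j - rho (pred j)) / dx)) as [Hpos Hneg].
  fold (slope rho dx j) in Hpos, Hneg; set (m := slope rho dx j) in *.
  assert (Hscale : forall x y, x <= y -> dx / 2 * x <= dx / 2 * y)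
    by (intros; apply Rmult_le_compat_l; lra).
  assert (Hright : dx / 2 * (theta * (rho (S j) - rho j) / dx) = rho (S j) - rho j)
    by (unfold theta; field; lra).
  assert (Hleft : dx / 2 * (theta * (rho j - rho (pred j)) / dx) = rho j - rho (pred j))
    by (unfold theta; field; lra).
  destruct (Rtotal_order 0 m) as [Hm | [<- | Hm]].
  - destruct (Hpos Hm) as [Ha Hc'].
    apply Hscale in Ha, Hc'; pose proof (Hscale 0 m ltac:(lra)); lra.
  - lra.
  - destruct (Hneg Hm) as [Ha Hc'].
    apply Hscale in Ha, Hc'; pose proof (Hscale m 0 ltac:(lra)); lra.
Qed.

Section Saturation.

Variables (psi : R -> R) (alpha : R).
Hypothesis psi_sat : is_saturation psi alpha.

Lemma alpha_pos : 0 < alpha.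
Proof. apply psi_sat. Qed.

Lemma psi_pos s : 0 <= s < alpha -> 0 < psi s.
Proof.
  intros Hs; destruct psi_sat as (_ & _ & _ & _ & Hsign).
  pose proof (Hsign s ltac:(lra) ltac:(lra)); nra.
Qed.

Lemma psi_between s : 0 <= s <= alpha -> 0 <= psi s <= psi 0.
Proof.
  intros Hs; destruct psi_sat as (_ & Hmono & _ & Halpha & _); split.
  - rewrite <- Halpha; apply Hmono; lra.
  - apply Hmono; lra.
Qed.

(* The infimum defining gamma runs over the open interval (0, alpha), so the
   endpoint s = 0 is covered by the 1/psi(0) part of Gamma instead. *)
Lemma Gamma_mul_alpha_psi_le gamma s :
  (forall s, 0 < s < alpha -> gamma <= (alpha - s) / (alpha * psi s)) ->
  0 <= s <= alpha -> Rmin (1 / psi 0) gamma * (alpha * psi s) <= alpha - s.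
Proof.
  intros Hgamma Hs; pose proof alpha_pos as Ha.
  destruct (Req_dec s alpha) as [-> | Hne].
  { destruct psi_sat as (_ & _ & _ & -> & _); lra. }
  pose proof (psi_pos s ltac:(lra)) as Hps.
  destruct (Req_dec s 0) as [-> | Hn0].
  - replace (alpha - 0) with (1 / psi 0 * (alpha * psi 0)) by (field; lra).
    apply Rmult_le_compat_r; [nra | apply Rmin_l].
  - replace (alpha - s) with ((alpha - s) / (alpha * psi s) * (alpha * psi s))
      by (field; nra).
    apply Rmult_le_compat_r; [nra|].
    eapply Rle_trans; [apply Rmin_r | apply Hgamma; lra].
Qed.

Lemma upwind_flux_bounds e w v U :
  0 <= e <= alpha -> 0 <= w <= alpha -> Rabs v <= U ->
  let F := e * psi w * pos_part v + w * psi e * neg_part v in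
  - (alpha * psi e * U) <= F /\ F <= e * psi 0 * U /\
  - (w * psi 0 * U) <= F /\ F <= alpha * psi w * U.
Proof.
  intros He Hw Hv F.
  pose proof (psi_between e He); pose proof (psi_between w Hw).
  pose proof (pos_part_bounds v U Hv); pose proof (neg_part_bounds v U Hv).
  assert (Hout := Rmult3_bounds e (psi w) (pos_part v) e (psi 0) U).
  assert (Hout' := Rmult3_bounds e (psi w) (pos_part v) alpha (psi w) U).
  assert (Hin := Rmult3_bounds w (psi e) (- neg_part v) w (psi 0) U).
  assert (Hin' := Rmult3_bounds w (psi e) (- neg_part v) alpha (psi e) U).
  assert (Hneg : w * psi e * neg_part v = - (w * psi e * - neg_part v)) by ring.
  unfold F; rewrite Hneg; repeat split; lra.
Qed.

End Saturation.

Section Scheme.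

Variables (psi u : R -> R) (alpha : R) (M : nat) (dx dt : R) (rho : nat -> R).
Hypothesis psi_sat : is_saturation psi alpha.
Hypothesis dx_pos : 0 < dx.
Hypothesis rho_range : forall k, (k <= S M)%nat -> 0 <= rho k <= alpha.

Local Notation U := (umax u M dx).
Local Notation E := (rhoE rho dx).
Local Notation W := (rhoW rho dx).
Local Notation F := (flux psi u M dx rho).

Lemma reconstruction_range j : (j <= M)%nat -> 0 <= E j <= alpha /\ 0 <= W j <= alpha.
Proof. intros Hj; apply reconstruction_between; auto; apply rho_range; lia. Qed.

Lemma flux_interior_bounds j : (0 < j < M)%nat ->
  - (alpha * psi (E j) * U) <= F j /\ F j <= E j * psi 0 * U /\
  - (W (S j) * psi 0 * U) <= F j /\ F j <= alpha * psi (W (S j)) * U.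
Proof.
  intros Hj; unfold flux.
  replace (Nat.eqb j 0) with false by (symmetry; apply Nat.eqb_neq; lia).
  replace (Nat.eqb j M) with false by (symmetry; apply Nat.eqb_neq; lia).
  apply upwind_flux_bounds; auto.
  - apply reconstruction_range; lia.
  - apply reconstruction_between; auto; apply rho_range; lia.
  - apply Rabs_le_umax; lia.
Qed.

Lemma flux_boundary j : j = 0%nat \/ j = M -> F j = 0.
Proof.
  intros [-> | ->]; unfold flux; [reflexivity|].
  destruct (Nat.eqb M 0); [|rewrite Nat.eqb_refl]; reflexivity.
Qed.

Lemma flux_right_bounds i : (1 <= i <= M)%nat ->
  - (alpha * psi (E i) * U) <= F i <= E i * psi 0 * U.
Proof.
  intros Hi; destruct (Nat.eq_dec i M) as [-> | Hne].
  - rewrite flux_boundary by auto.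
    destruct (reconstruction_range M (le_n M)) as [HE _].
    pose proof (psi_between psi alpha psi_sat _ HE); pose proof (umax_ge0 u M dx).
    assert (0 <= alpha * psi (E M) * U) by (apply Rmult3_bounds with alpha (psi (E M)) U; lra).
    assert (0 <= E M * psi 0 * U) by (apply Rmult3_bounds with (E M) (psi 0) U; lra).
    lra.
  - pose proof (flux_interior_bounds i ltac:(lia)); lra.
Qed.

Lemma flux_left_bounds i : (1 <= i <= M)%nat ->
  - (W i * psi 0 * U) <= F (pred i) <= alpha * psi (W i) * U.
Proof.
  intros Hi; destruct (Nat.eq_dec i 1) as [-> | Hne].
  - rewrite flux_boundary by auto.
    destruct (reconstruction_range 1 ltac:(lia)) as [_ HW].
    pose proof (psi_between psi alpha psi_sat _ HW); pose proof (umax_ge0 u M dx).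
    assert (0 <= alpha * psi (W 1%nat) * U) by (apply Rmult3_bounds with alpha (psi (W 1%nat)) U; lra).
    assert (0 <= W 1%nat * psi 0 * U) by (apply Rmult3_bounds with (W 1%nat) (psi 0) U; lra).
    lra.
  - pose proof (flux_interior_bounds (pred i) ltac:(lia)).
    replace (S (pred i)) with i in * by lia; lra.
Qed.

Hypothesis dt_nonneg : 0 <= dt.
Hypothesis cfl : forall s, 0 <= s <= alpha -> 2 * (dt / dx) * U * (alpha * psi s) <= alpha - s.

Lemma step_range i : (1 <= i <= M)%nat -> 0 <= step psi u M dx dt rho i <= alpha.
Proof.
  intros Hi; unfold step.
  set (lam := dt / dx) in cfl |- *.
  assert (Hlam : 0 <= lam) by (apply Rle_mult_inv_pos; lra).
  assert (Hscale : forall x y, x <= y -> lam * x <= lam * y)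
    by (intros; apply Rmult_le_compat_l; lra).
  pose proof (rhoE_add_rhoW rho dx i) as Hmean.
  destruct (reconstruction_range i ltac:(lia)) as [HE HW].
  pose proof (flux_right_bounds i Hi) as [HrL HrU].
  pose proof (flux_left_bounds i Hi) as [HlL HlU].
  pose proof (alpha_pos psi alpha psi_sat) as Ha.
  assert (Hout : lam * (F i - F (pred i)) <= rho i).
  { assert (Hcfl0 : 2 * lam * U * psi 0 <= 1).
    { pose proof (cfl 0 ltac:(lra)).
      apply Rmult_le_reg_l with alpha; [lra|]; nra. }
    pose proof (Hscale _ _ (Rplus_le_compat _ _ _ _ HrU (Ropp_le_contravar _ _ HlL))).
    assert (rho i * (2 * lam * U * psi 0) <= rho i * 1)
      by (apply Rmult_le_compat_l; [apply rho_range; lia | exact Hcfl0]).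
    nra. }
  assert (Hin : lam * (F (pred i) - F i) <= alpha - rho i).
  { pose proof (cfl (E i) HE); pose proof (cfl (W i) HW).
    pose proof (Hscale _ _ (Rplus_le_compat _ _ _ _ HlU (Ropp_le_contravar _ _ HrL))).
    nra. }
  split; nra.
Qed.

End Scheme.

Theorem proposition2p4
  (psi : R -> R) (alpha : R) (u : R -> R) (L : R) (M : nat) (dt : R)
  (rho : nat -> R) (gamma : R) :
  is_saturation psi alpha ->
  0 < L -> (1 <= M)%nat -> 0 < dt ->
  is_inf (fun y => exists s, 0 < s < alpha /\ y = (alpha - s) / (alpha * psi s)) gamma ->
  (forall i, (i <= S M)%nat -> 0 <= rho i <= alpha) ->
  dt * (2 * umax u M (L / INR M)) <= Rmin (1 / psi 0) gamma * (L / INR M) ->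
  forall i, (1 <= i <= M)%nat ->
    0 <= step psi u M (L / INR M) dt rho i <= alpha.
Proof.
  intros Hsat HL HM Hdt [Hgamma _] Hrho Hcfl.
  set (dx := L / INR M) in *.
  assert (Hdx : 0 < dx) by (apply Rdiv_lt_0_compat; [lra | apply lt_0_INR; lia]).
  apply step_range; auto; [lra|].
  intros s Hs.
  assert (Hcourant : 2 * (dt / dx) * umax u M dx <= Rmin (1 / psi 0) gamma).
  { apply Rmult_le_reg_r with dx; [lra|].
    replace (2 * (dt / dx) * umax u M dx * dx) with (dt * (2 * umax u M dx)) by (field; lra).
    exact Hcfl. }
  eapply Rle_trans; [| apply (Gamma_mul_alpha_psi_le psi alpha Hsat gamma s); auto].
  - apply Rmult_le_compat_r; [|exact Hcourant].
    pose proof (psi_between psi alpha Hsat s Hs); pose proof (alpha_pos psi alpha Hsat); nra.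
  - intros s' Hs'; apply Hgamma; exists s'; auto.
Qed.
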